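(* Let $f:\mathbb{R}^\ell\times\mathbb{R}^m\to\mathbb{R}^\ell$ be $C^1$, let $\Lambda$ be a parameter shift with limits $\lambda_\pm$, and let $X$ define a stable path. Let $N\in\mathbb{N}$ be such that $\|[D_xf(X(s),\Lambda(s))]^n\|<\frac14$ for all $s\in\mathbb{R}$ and all $n\ge N$. Then for all sufficiently small $\epsilon>0$, $F_0^n(\mathcal{N}_\epsilon)\subset\mathcal{N}_{\epsilon/3}$ for all $n\in\{N,N+1,\ldots,N(N+1)\}$.
   Context: A parameter shift is a $C^1$ function $\Lambda:\mathbb{R}\to\mathbb{R}^m$ with $\lim_{s\to\pm\infty}\Lambda(s)=\lambda_\pm$ and $\lim_{s\to\pm\infty}\Lambda'(s)=0$. A stable path is given by $X:\mathbb{R}\to\mathbb{R}^\ell$ such that: $X(s)$ is a fixed point of $f(\cdot,\Lambda(s))$ for every $s$; $\{(s,X(s))\}$ is a connected curve; the limits $X_\pm=\lim_{s\to\pm\infty}X(s)$ exist and are fixed points of $f(\cdot,\lambda_\pm)$; and the spectral radius of $D_xf(X(s),\Lambda(s))$ is $<1$ for all $s\in\mathbb{R}\cup\{\pm\infty\}$ (with $X(\pm\infty)=X_\pm$, $\Lambda(\pm\infty)=\lambda_\pm$). For $r\ge0$, $F_r:\mathbb{R}^{\ell+1}\to\mathbb{R}^{\ell+1}$ is $F_r(s,x)=(s+r,f(x,\Lambda(s)))$, and $F_r^n$ is its $n$-fold composition. For $\epsilon>0$, $\mathcal{N}_\epsilon=\{(s,x):s\in\mathbb{R},\ \|x-X(s)\|\le\epsilon\}$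 (Euclidean norm; matrix norms are the induced norms). *)

From HB Require Import structures.
From mathcomp Require Import all_boot all_order all_algebra.
From mathcomp Require Import all_classical all_reals.
From mathcomp Require Import topology normedtype derive.
From mathcomp Require Import complex.
Import Order.TTheory GRing.Theory Num.Theory.
Import numFieldNormedType.Exports.

Set Implicit Arguments.
Unset Strict Implicit.
Unset Printing Implicit Defensive.

Local Open Scope classical_set_scope.
Local Open Scope ring_scope.

Section Defs.
Variable R : realType.

Definition enorm n (v : 'cV[R]_n) : R := Num.sqrt (\sum_i v i 0 ^+ 2).

Definition opnorm n (A : 'M[R]_n) : R :=
  sup [set enorm (A *m v) | v in [set v : 'cV[R]_n | enorm v <= 1]].

Definition spectral_radius n (A : 'M[R]_n) : R :=
  sup [set r : R | exists2 mu : complex.complex R,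
         eigenvalue (map_mx (fun a : R => complex.Complex a 0) A) mu
       & `|mu| = complex.Complex r 0].

Definition jacobian p q (F : 'cV[R]_p -> 'cV[R]_q) (z : 'cV[R]_p) : 'M[R]_(q, p) :=
  \matrix_(i < q, j < p) ('d F z (delta_mx j 0 : 'cV[R]_p)) i 0.

Definition C1 p q (F : 'cV[R]_p -> 'cV[R]_q) : Prop :=
  (forall z, differentiable F z) /\ continuous (jacobian F).

Definition uncurry_f l m (f : 'cV[R]_l -> 'cV[R]_m -> 'cV[R]_l)
  : 'cV[R]_(l + m) -> 'cV[R]_l := fun z => f (usubmx z) (dsubmx z).

Definition Dxf l m (f : 'cV[R]_l -> 'cV[R]_m -> 'cV[R]_l) x lam : 'M[R]_l :=
  lsubmx (jacobian (uncurry_f f) (col_mx x lam)).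

Definition parameter_shift m (Lam : R -> 'cV[R]_m) (lm lp : 'cV[R]_m) : Prop :=
  (forall s, derivable Lam s 1) /\ continuous (derive1 Lam) /\
  (Lam s @[s --> -oo] --> lm) /\ (Lam s @[s --> +oo] --> lp) /\
  ((derive1 Lam) s @[s --> -oo] --> 0) /\ ((derive1 Lam) s @[s --> +oo] --> 0).

Definition stable_path l m (f : 'cV[R]_l -> 'cV[R]_m -> 'cV[R]_l)
  (Lam : R -> 'cV[R]_m) (lm lp : 'cV[R]_m) (X : R -> 'cV[R]_l) : Prop :=
  (forall s, f (X s) (Lam s) = X s) /\
  connected [set p : R * 'cV[R]_l | p.2 = X p.1] /\
  exists Xm Xp : 'cV[R]_l,
    (X s @[s --> -oo] --> Xm) /\ (X s @[s --> +oo] --> Xp) /\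
    f Xm lm = Xm /\ f Xp lp = Xp /\
    (forall s, spectral_radius (Dxf f (X s) (Lam s)) < 1) /\
    spectral_radius (Dxf f Xm lm) < 1 /\ spectral_radius (Dxf f Xp lp) < 1.

Definition Fr l m (f : 'cV[R]_l -> 'cV[R]_m -> 'cV[R]_l) (Lam : R -> 'cV[R]_m)
  (r : R) (p : R * 'cV[R]_l) : R * 'cV[R]_l := (p.1 + r, f p.2 (Lam p.1)).

Definition Neps l (X : R -> 'cV[R]_l) (eps : R) : set (R * 'cV[R]_l) :=
  [set p | enorm (p.2 - X p.1) <= eps].

End Defs.

(* Write A(s) for D_x f(X s, Lam s). Since |A(s)^N| < 1/4, the map I - A(s) is
   boundedly invertible, so a first-order expansion of the fixed-point equation
   X s = f (X s) (Lam s) gives |X s - X s0| <= K |Lam s - Lam s0| as long as X s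
   stays close to X s0; connectedness of the graph of X rules out jumps, hence X
   is continuous. The path s |-> (X s, Lam s) is then continuous with limits at
   -oo and +oo, so by compactness the Jacobian of f is bounded along it and its
   first-order Taylor remainder is uniformly small on a tube around it. For fixed
   s, the errors e_j = f^j(x) - X s satisfy e_(j+1) = A e_j + O(k |e_j|), whence
   e_n = A^n e_0 + O(n (|A| + 1)^n k |e_0|) for n <= N (N + 1); as |A^n| < 1/4
   for n >= N, a small k yields |e_n| <= eps/4 + eps/12 = eps/3. *)

From Pilot Require Import Defs.
From HB Require Import structures.
From mathcomp Require Import all_boot all_order all_algebra.
From mathcomp Require Import all_classical all_reals.
From mathcomp Require Import topology normedtype derive.
From mathcomp Require Import ring lra.
Import Order.TTheory GRing.Theory Num.Theory.
Import numFieldNormedType.Exports.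
Local Open Scope classical_set_scope.
Local Open Scope ring_scope.
Set Implicit Arguments.
Unset Strict Implicit.

Local Notation jacobian := Defs.jacobian.

(* Estimates are carried out in the entrywise max norm [`|M|] of matrices and
   transferred to the Euclidean norm [enorm] only where the statement needs it. *)
Section MatrixNorms.
Variable R : realType.

Lemma mx_norm_ge_entry a b (M : 'M[R]_(a, b)) i j : `|M i j| <= `|M|.
Proof. by rewrite [`|M|]mx_normrE; exact: (le_bigmax _ _ (i, j)). Qed.

Lemma mx_norm_le a b (M : 'M[R]_(a, b)) c :
  0 <= c -> (forall i j, `|M i j| <= c) -> `|M| <= c.
Proof. by move=> c0 Mc; rewrite [`|M|]mx_normrE; apply: bigmax_le => // -[]. Qed.

Lemma mx_norm_mulmx_le a b c (M : 'M[R]_(a, b)) (N : 'M[R]_(b, c)) :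
  `|M *m N| <= b%:R * `|M| * `|N|.
Proof.
apply: mx_norm_le => [|i j]; first by rewrite !mulr_ge0.
rewrite mxE (le_trans (ler_norm_sum _ _ _)) //.
apply: (@le_trans _ _ (\sum_(k < b) `|M| * `|N|)).
  by apply: ler_sum => k _; rewrite normrM ler_pM ?mx_norm_ge_entry.
by rewrite sumr_const card_ord -mulrA mulr_natl.
Qed.

Lemma mx_norm_col_mx_le a b (u : 'cV[R]_a) (w : 'cV[R]_b) :
  `|col_mx u w| <= `|u| + `|w|.
Proof.
apply: mx_norm_le => [|i j]; first by rewrite addr_ge0.
rewrite -(splitK i); case: (fintype.split i) => k /=; rewrite ?col_mxEu ?col_mxEd.
- by rewrite (le_trans (mx_norm_ge_entry _ _ _)) ?lerDl.
- by rewrite (le_trans (mx_norm_ge_entry _ _ _)) ?lerDr.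
Qed.

Lemma mx_norm_col_mx0 a b (u : 'cV[R]_a) : `|col_mx u (0 : 'cV[R]_b)| = `|u|.
Proof.
apply/eqP; rewrite eq_le (le_trans (mx_norm_col_mx_le _ _)) ?normr0 ?addr0 //=.
by apply: mx_norm_le => // i j; rewrite -(col_mxEu u (0 : 'cV[R]_b)) mx_norm_ge_entry.
Qed.

Lemma mx_norm_lsubmx_le a b c (M : 'M[R]_(a, b + c)) : `|lsubmx M| <= `|M|.
Proof. by apply: mx_norm_le => // i j; rewrite mxE mx_norm_ge_entry. Qed.

Lemma mx_norm_exp_mulmx_le n (A : 'M[R]_n) k (v : 'cV[R]_n) :
  `|A ^+ k *m v| <= (n%:R * `|A|) ^+ k * `|v|.
Proof.
elim: k => [|k IHk]; first by rewrite expr0 mul1r mul1mx.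
rewrite exprS -mulmxE -mulmxA exprS -mulrA.
by rewrite (le_trans (mx_norm_mulmx_le _ _)) // ler_wpM2l ?mulr_ge0.
Qed.

Lemma enorm_ge0 n (v : 'cV[R]_n) : 0 <= enorm v.
Proof. exact: sqrtr_ge0. Qed.

Lemma enorm_sqr n (v : 'cV[R]_n) : enorm v ^+ 2 = \sum_i v i 0 ^+ 2.
Proof. by rewrite sqr_sqrtr // sumr_ge0 // => i _; rewrite sqr_ge0. Qed.

Lemma enorm_ge_entry n (v : 'cV[R]_n) i : `|v i 0| <= enorm v.
Proof.
rewrite -(ler_pXn2r (n := 2)) ?nnegrE ?enorm_ge0 // enorm_sqr real_normK ?num_real //.
by rewrite (bigD1 i) //= lerDl sumr_ge0 // => k _; rewrite sqr_ge0.
Qed.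

Lemma mx_norm_le_enorm n (v : 'cV[R]_n) : `|v| <= enorm v.
Proof. by apply: mx_norm_le => [|i j]; rewrite ?enorm_ge0 // ord1 enorm_ge_entry. Qed.

Lemma enorm_le_mx_norm n (v : 'cV[R]_n) : enorm v <= n%:R * `|v|.
Proof.
rewrite -(ler_pXn2r (n := 2)) ?nnegrE ?enorm_ge0 ?mulr_ge0 // enorm_sqr.
apply: (@le_trans _ _ (\sum_(i < n) `|v| ^+ 2)).
  apply: ler_sum => i _; rewrite -real_normK ?num_real // lerXn2r ?nnegrE //.
  exact: mx_norm_ge_entry.
rewrite sumr_const card_ord exprMn -[leLHS]mulr_natl ler_wpM2r ?sqr_ge0 //.
by rewrite -natrX ler_nat; case: n {v} => // k; rewrite expnS leq_pmulr.
Qed.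

Lemma enorm_eq0 n (v : 'cV[R]_n) : enorm v = 0 -> v = 0.
Proof.
move=> v0; apply/matrixP => i j; rewrite ord1 mxE; apply/eqP.
by rewrite -normr_le0 -v0 enorm_ge_entry.
Qed.

Lemma enormZ n (a : R) (v : 'cV[R]_n) : enorm (a *: v) = `|a| * enorm v.
Proof.
rewrite /enorm (eq_bigr (fun i => a ^+ 2 * v i 0 ^+ 2)) => [|i _]; last first.
  by rewrite mxE exprMn.
by rewrite -mulr_sumr sqrtrM ?sqr_ge0 // sqrtr_sqr.
Qed.

Lemma enorm_dot_le n (u v : 'cV[R]_n) :
  \sum_i u i 0 * v i 0 <= enorm u * enorm v.
Proof.
have [u0|u0] := eqVneq (enorm u) 0.
  by rewrite u0 mul0r (enorm_eq0 u0) big1 // => i _; rewrite mxE mul0r.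
have [v0|v0] := eqVneq (enorm v) 0.
  by rewrite v0 mulr0 (enorm_eq0 v0) big1 // => i _; rewrite mxE mulr0.
have uv_gt0 : 0 < 2 * (enorm u * enorm v).
  by rewrite !mulr_gt0 // lt0r ?u0 ?v0 enorm_ge0.
have expand : \sum_i (enorm v * u i 0 - enorm u * v i 0) ^+ 2 =
    2 * (enorm u * enorm v) * (enorm u * enorm v - \sum_i u i 0 * v i 0).
  rewrite (eq_bigr (fun i => enorm v ^+ 2 * u i 0 ^+ 2
    - 2 * enorm u * enorm v * (u i 0 * v i 0) + enorm u ^+ 2 * v i 0 ^+ 2)).
    by rewrite !big_split /= sumrN -!mulr_sumr -!enorm_sqr; ring.
  by move=> i _; ring.
have : 0 <= \sum_i (enorm v * u i 0 - enorm u * v i 0) ^+ 2.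
  by apply: sumr_ge0 => i _; rewrite sqr_ge0.
by rewrite expand pmulr_rge0 // subr_ge0.
Qed.

Lemma enormD n (u v : 'cV[R]_n) : enorm (u + v) <= enorm u + enorm v.
Proof.
rewrite -(ler_pXn2r (n := 2)) ?nnegrE ?addr_ge0 ?enorm_ge0 // sqrrD !enorm_sqr.
rewrite (eq_bigr (fun i => u i 0 ^+ 2 + 2 * (u i 0 * v i 0) + v i 0 ^+ 2)).
  by rewrite !big_split /= -mulr_sumr; have := enorm_dot_le u v; lra.
by move=> i _; rewrite mxE; ring.
Qed.

Lemma opnorm_mulmx_le n (A : 'M[R]_n) (v : 'cV[R]_n) :
  enorm (A *m v) <= opnorm A * enorm v.
Proof.
have [v0|v0] := eqVneq (enorm v) 0.
  rewrite v0 mulr0 (enorm_eq0 v0) mulmx0 /enorm big1 ?sqrtr0 // => i _.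
  by rewrite mxE expr0n.
have v_gt0 : 0 < enorm v by rewrite lt0r v0 enorm_ge0.
have bounded : has_ubound [set enorm (A *m w) | w in [set w | enorm w <= 1]].
  exists (n%:R * (n%:R * `|A|)) => _ [w /= w1 <-].
  rewrite (le_trans (enorm_le_mx_norm _)) // ler_wpM2l //.
  rewrite (le_trans (mx_norm_mulmx_le _ _)) // -[leRHS]mulr1 ler_wpM2l ?mulr_ge0 //.
  exact: le_trans (mx_norm_le_enorm _) w1.
have /(ub_le_sup bounded) : [set enorm (A *m w) | w in [set w | enorm w <= 1]]
    (enorm (A *m ((enorm v)^-1 *: v))).
  by exists ((enorm v)^-1 *: v) => //=; rewrite enormZ gtr0_norm ?invr_gt0 ?mulVf.
rewrite -scalemxAr enormZ gtr0_norm ?invr_gt0 //.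
by rewrite ler_pdivrMl // mulrC.
Qed.

End MatrixNorms.

Section Jacobian.
Variables (R : realType) (p q : nat) (F : 'cV[R]_p -> 'cV[R]_q).
Hypothesis dF : forall z, differentiable F z.

Lemma diff_jacobian z h : 'd F z h = jacobian F z *m h.
Proof.
apply/matrixP => i j; rewrite ord1 !mxE {1}[h]matrix_sum_delta linear_sum summxE.
by apply: eq_bigr => k _; rewrite big_ord1 linearZ /= !mxE mulrC.
Qed.

Lemma is_derive_line_entry (z h : 'cV[R]_p) (t : R) i :
  is_derive t 1 (fun u : R => F (u *: h + z) i 0)
    ((jacobian F (t *: h + z) *m h) i 0).
Proof.
pose line u : 'cV[R]_p := u *: h + z.
have dline : is_diff t line ( *:%R^~ h).
  by rewrite -[X in is_diff _ _ X]addr0; apply: is_diffD.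
have dFline : is_diff t (F \o line) ('d F (line t) \o *:%R^~ h).
  exact: is_diff_comp dline (DiffDef _ (dF _) erefl).
have Fline_der : derivable (F \o line) t 1 by apply: diff_derivable.
apply: DeriveDef; first by move/derivable_mxP : Fline_der; apply.
move/matrixP/(_ i 0) : (derive_mx Fline_der); rewrite mxE => <-.
by rewrite deriveE // diff_val /= scale1r diff_jacobian.
Qed.

Lemma jacobian_mvt_entry (z h : 'cV[R]_p) i :
  exists2 c : R, c \in `]0, 1[ &
    F (h + z) i 0 - F z i 0 = (jacobian F (c *: h + z) *m h) i 0.
Proof.
have [|c c01] := MVT ltr01 (fun t _ => is_derive_line_entry z h t i).
  apply: derivable_within_continuous => t _.
  by have [] := is_derive_line_entry z h t i.
by rewrite scale1r scale0r add0r subr0 mulr1 => ->; exists c.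
Qed.

Lemma jacobian_remainder_le (z h : 'cV[R]_p) k : 0 <= k ->
  (forall c : R, c \in `]0, 1[ -> `|jacobian F (c *: h + z) - jacobian F z| <= k) ->
  `|F (h + z) - F z - jacobian F z *m h| <= p%:R * k * `|h|.
Proof.
move=> k0 Jk; apply: mx_norm_le => [|i j]; first by rewrite !mulr_ge0.
have [c c01 mvt] := jacobian_mvt_entry z h i.
have -> : (F (h + z) - F z - jacobian F z *m h) i j
    = ((jacobian F (c *: h + z) - jacobian F z) *m h) i 0.
  by move: mvt; rewrite ord1 mulmxBl !mxE => ->.
rewrite (le_trans (mx_norm_ge_entry _ _ _)) // (le_trans (mx_norm_mulmx_le _ _)) //.
by rewrite ler_wpM2r // ler_wpM2l // Jk.
Qed.

Lemma jacobian_remainder_near z0 k : {for z0, continuous (jacobian F)} -> 0 < k ->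
  exists2 r : R, 0 < r & forall z h, `|z - z0| < r -> `|h| < r ->
    `|F (h + z) - F z - jacobian F z *m h| <= k * `|h|.
Proof.
move=> cJ k_gt0; pose e : R := k / p.+1%:R.
have e2_gt0 : 0 < e / 2 by rewrite !divr_gt0.
have [d /= d_gt0 Jd] := (nbhs_normP _ _).1 ((cvgrPdist_lt _ _).1 cJ _ e2_gt0).
exists (d / 2) => [|z h zr hr]; first by rewrite divr_gt0.
have Jz0 (c : R) : 0 <= c <= 1 -> `|jacobian F z0 - jacobian F (c *: h + z)| < e / 2.
  move=> /andP[c0 c1]; apply: Jd => /=.
  rewrite opprD addrA addrAC (le_lt_trans (ler_normB _ _)) // normrZ ger0_norm //.
  rewrite distrC in zr; rewrite [d]splitr ltr_leD // (le_trans _ (ltW hr)) //.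
  by rewrite ler_piMl.
apply: le_trans (jacobian_remainder_le (k := e) _ _) _.
- by rewrite ltW // divr_gt0.
- move=> c; rewrite in_itv /= => /andP[c0 c1].
  have Jz : `|jacobian F z0 - jacobian F z| < e / 2.
    by have := Jz0 0; rewrite scale0r add0r lexx ler01; apply.
  have Jc : `|jacobian F z0 - jacobian F (c *: h + z)| < e / 2.
    by apply: Jz0; rewrite !ltW.
  rewrite (distrC (jacobian F z0)) in Jc.
  rewrite [e]splitr; apply: le_trans (ler_distD (jacobian F z0) _ _) _.
  exact: lerD (ltW Jc) (ltW Jz).
- rewrite ler_wpM2r // mulrCA ler_piMr ?(ltW k_gt0) //.
  by rewrite ler_pdivrMr // mul1r ler_nat.
Qed.

End Jacobian.

Section Curves.
Variables (R : realType) (V : normedModType R).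

Lemma cvg_col_mx (T : Type) (F : set_system T) {FF : Filter F} a b
    (u : T -> 'cV[R]_a) (w : T -> 'cV[R]_b) (u0 : 'cV[R]_a) (w0 : 'cV[R]_b) :
  u t @[t --> F] --> u0 -> w t @[t --> F] --> w0 ->
  col_mx (u t) (w t) @[t --> F] --> col_mx u0 w0.
Proof.
move=> /cvgrPdist_lt u_cvg /cvgrPdist_lt w_cvg; apply/cvgrPdist_lt => e e_gt0.
have e2_gt0 : 0 < e / 2 by rewrite divr_gt0.
near=> t; rewrite opp_col_mx add_col_mx (le_lt_trans (mx_norm_col_mx_le _ _)) //.
rewrite [e]splitr ltrD //; near: t; [exact: u_cvg | exact: w_cvg].
Unshelve. all: by end_near.
Qed.

Lemma near_uniform_along_curve (I : Type) (F : set_system I) {FF : Filter F}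
    (c : R -> V) (cm cp : V) (P : I -> V -> Prop) :
  continuous c -> c s @[s --> -oo] --> cm -> c s @[s --> +oo] --> cp ->
  (forall z : V, \forall y \near z & i \near F, P i y) ->
  \forall i \near F, forall s, P i (c s).
Proof.
move=> c_cont c_minf c_pinf P_loc.
have tail (G : set_system R) (FG : Filter G) (z : V) : c s @[s --> G] --> z ->
    exists2 S, G S & \forall i \near F, forall s, S s -> P i (c s).
  move=> cz; have [[A B] /= [zA FB] AB] := P_loc z.
  exists (c @^-1` A); first exact: cz zA.
  by apply: filterS FB => i Bi s As; exact: (AB (c s, i)).
have [Sm [Tm [_ SmT]] PSm] := tail _ _ _ c_minf.
have [Sp [Tp [_ SpT]] PSp] := tail _ _ _ c_pinf.
have PK : \forall i \near F, `[Tm, Tp] `<=` (fun s => P i (c s)).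
  have := (compact_near_coveringP _).1 (@segment_compact _ Tm Tp) I F
    (fun i s => P i (c s)) FF.
  apply => s0 _.
  have [[A B] /= [cA FB] AB] := P_loc (c s0).
  exists (c @^-1` A, B) => [|[s i] /= [As Bi]]; last exact: (AB (c s, i)).
  by split => //; exact: c_cont cA.
near=> i.
have PSm_i : forall s, Sm s -> P i (c s) by near: i.
have PSp_i : forall s, Sp s -> P i (c s) by near: i.
have PK_i : `[Tm, Tp] `<=` (fun s => P i (c s)) by near: i.
move=> s; have [sTm|Tms] := ltP s Tm; first exact/PSm_i/SmT.
have [Tps|sTp] := ltP Tp s; first exact/PSp_i/SpT.
by apply: PK_i; rewrite /= in_itv /= Tms.
Unshelve. all: by end_near.
Qed.

End Curves.

Section ConnectedGraph.
Variables (R : realType) (V : normedModType R).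

(* The sign [sg] lets one statement cover both [s0 < s1] and [s1 < s0]. On the
   graph, "before s0, or before s1 and within d of X s0" is open and, thanks to
   the gap, equal to its closed counterpart; connectedness then forces it to
   contain (s1, X s1). *)
Lemma connected_graph_no_jump (X : R -> V) (sg s0 s1 d : R) :
  connected [set p : R * V | p.2 = X p.1] -> 0 < d -> sg * s0 < sg * s1 ->
  (forall s, sg * s0 <= sg * s <= sg * s1 ->
     `|X s - X s0| < d -> `|X s - X s0| <= d / 2) ->
  `|X s1 - X s0| <= d / 2.
Proof.
move=> G_conn d_gt0 s01 gap; rewrite leNgt; apply/negP => far.
have sg_neq0 : sg != 0 by apply: contraTneq s01 => ->; rewrite !mul0r ltxx.
pose t (p : R * V) := sg * p.1.
pose r (p : R * V) := `|p.2 - X s0|.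
have t_cont : continuous t.
  move=> p; apply: (@continuous_comp _ _ _ fst ( *%R sg)); first exact: cvg_fst.
  exact: mulrl_continuous.
have r_cont : continuous r.
  move=> p; apply: (@continuous_comp _ _ _ snd (fun x => `|x - X s0|)).
    exact: cvg_snd.
  apply: (@continuous_comp _ _ _ (fun x => x - X s0) (@Num.norm _ V)).
    by apply: continuousB => //; exact: cst_continuous.
  exact: norm_continuous.
pose C := t @^-1` [set y | y < sg * s0] `|`
  (t @^-1` [set y | y < sg * s1] `&` r @^-1` [set y | y < d]).
pose D := t @^-1` [set y | y <= sg * s0] `|`
  (t @^-1` [set y | y <= sg * s1] `&` r @^-1` [set y | y <= d / 2]).
have C_open : open C.
  by apply: openU; last apply: openI; apply: open_comp => // *; apply: open_lt.
have D_closed : closed D.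
  by apply: closedU; last apply: closedI; apply: preimage_closed => //; apply: closed_le.
set G := [set p : R * V | p.2 = X p.1].
have GC_GD : G `&` C = G `&` D.
  apply/seteqP; split => -[s x] [xs Cs]; have {}xs : x = X s := xs; subst x;
    split => //; rewrite /C /D /t /r /= in Cs *.
  - case: Cs => [lt0|[lt1 near_d]]; first by left; exact: ltW.
    have [le0|gt0] := leP (sg * s) (sg * s0); first by left.
    by right; split; [exact: ltW | apply: gap; rewrite ?ltW].
  - case: Cs => [|[le1 near_d2]].
      rewrite le_eqVlt => /orP[/eqP /(mulfI sg_neq0) ->|]; last by left.
      by right; rewrite subrr normr0.
    have [lt0|ge0] := ltP (sg * s) (sg * s0); first by left.
    right; split.
      rewrite lt_neqAle le1 andbT; apply: contraTneq far => /(mulfI sg_neq0) <-.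
      by rewrite -leNgt.
    by rewrite (le_lt_trans near_d2) // ltr_pdivrMr // ltr_pMr // ltr1n.
have GC0 : G `&` C !=set0.
  by exists (s0, X s0); split => //; right; rewrite /t /r /= subrr normr0.
have := G_conn _ GC0 (ex_intro2 _ _ C C_open erefl) (ex_intro2 _ _ D D_closed GC_GD).
move=> /seteqP[_ /(_ (s1, X s1) erefl)] [_].
by rewrite /C /t /r /= ltxx => -[/(lt_trans s01)|[]] //; rewrite ltxx.
Qed.

End ConnectedGraph.

Section LinearIterates.
Variables (R : realType) (n : nat).
Implicit Types (A : 'M[R]_n) (v : 'cV[R]_n).

Lemma subr_exp_mulmx A k v : v - A ^+ k *m v = \sum_(i < k) A ^+ i *m (v - A *m v).
Proof.
elim: k => [|k IHk]; first by rewrite big_ord0 expr0 mul1mx subrr.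
by rewrite big_ord_recr /= -IHk mulmxBr mulmxA mulmxE -exprSr addrA subrK.
Qed.

Lemma id_sub_mulmx_bounded_below A N : opnorm (A ^+ N) < 1 ->
  exists2 C : R, 0 < C & forall v, `|v| <= C * `|v - A *m v|.
Proof.
move=> AN_lt1; set a := opnorm (A ^+ N).
pose b := n%:R * \sum_(k < N) (n%:R * `|A|) ^+ k.
have b_ge0 : 0 <= b.
  by rewrite mulr_ge0 // sumr_ge0 // => k _; rewrite exprn_ge0 ?mulr_ge0.
exists (b / (1 - a) + 1) => [|v]; first by rewrite ltr_wpDl // divr_ge0 // subr_ge0 ltW.
have near_fixed : enorm (v - A ^+ N *m v) <= b * `|v - A *m v|.
  rewrite (le_trans (enorm_le_mx_norm _)) // -mulrA ler_wpM2l // subr_exp_mulmx.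
  rewrite (le_trans (ler_norm_sum _ _ _)) // mulr_suml; apply: ler_sum => k _.
  exact: mx_norm_exp_mulmx_le.
have contract : enorm (A ^+ N *m v) <= a * enorm v := opnorm_mulmx_le _ _.
have : enorm v <= a * enorm v + b * `|v - A *m v|.
  rewrite -{1}[v](subrK (A ^+ N *m v)) (le_trans (enormD _ _)) // addrC.
  exact: lerD.
have := mx_norm_le_enorm v; have := normr_ge0 (v - A *m v).
move: (enorm v) `|v| `|v - A *m v| => x y z z_ge0 yx xz.
rewrite (le_trans yx) // mulrDl mul1r mulrAC (@le_trans _ _ (b * z / (1 - a))) //.
  by rewrite ler_pdivlMr ?subr_gt0 //; nra.
by rewrite lerDl.
Qed.

Lemma perturbed_orbit_deviation_le A (e : nat -> 'cV[R]_n) (L k rho : R) P :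
  0 <= L -> 0 <= k <= 1 -> (forall y : 'cV[R]_n, `|A *m y| <= L * `|y|) ->
  (forall j, `|e j| <= rho -> `|e j.+1 - A *m e j| <= k * `|e j|) ->
  (L + 1) ^+ P * `|e 0%N| <= rho ->
  forall j, (j <= P)%N ->
    `|e j - A ^+ j *m e 0%N| <= j%:R * (L + 1) ^+ j * k * `|e 0%N|.
Proof.
move=> L_ge0 /andP[k_ge0 k_le1] AL step e0_small.
have L1_ge1 : 1 <= L + 1 by rewrite lerDr.
have small j : (j <= P)%N -> `|e j| <= (L + 1) ^+ j * `|e 0%N| -> `|e j| <= rho.
  move=> jP /le_trans; apply; apply: le_trans e0_small.
  by rewrite ler_wpM2r // ler_weXn2l.
have grow j : (j <= P)%N -> `|e j| <= (L + 1) ^+ j * `|e 0%N|.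
  elim: j => [|j IHj] jP; first by rewrite expr0 mul1r.
  have {}IHj := IHj (ltnW jP); have ej1 := step j (small j (ltnW jP) IHj).
  rewrite -[e j.+1](subrK (A *m e j)).
  apply: le_trans (ler_normD _ _) _; apply: le_trans (lerD ej1 (AL _)) _.
  rewrite -mulrDl exprS -mulrA ler_pM ?addr_ge0 //.
  by rewrite addrC lerD2l.
elim=> [|j IHj] jP; first by rewrite expr0 mul1mx subrr normr0 !mul0r.
have -> : e j.+1 - A ^+ j.+1 *m e 0%N
    = (e j.+1 - A *m e j) + A *m (e j - A ^+ j *m e 0%N).
  by rewrite mulmxBr mulmxA mulmxE -exprS addrA subrK.
apply: le_trans (ler_normD _ _) _.
apply: le_trans (lerD (step j (small j (ltnW jP) (grow j (ltnW jP)))) (AL _)) _.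
apply: le_trans (lerD (ler_wpM2l k_ge0 (grow j (ltnW jP)))
                      (ler_wpM2l L_ge0 (IHj (ltnW jP)))) _.
rewrite -natr1 exprS -subr_ge0.
have := normr_ge0 (e 0%N); have := exprn_ge0 j (le_trans ler01 L1_ge1).
move: `|e 0%N| ((L + 1) ^+ j) => x Mj Mj_ge0 x_ge0.
have -> : (j%:R + 1) * ((L + 1) * Mj) * k * x - (k * (Mj * x) + L * (j%:R * Mj * k * x))
    = k * Mj * x * (j%:R + L) by ring.
by rewrite !mulr_ge0 // addr_ge0.
Qed.

Lemma perturbed_orbit_enorm_le A (e : nat -> 'cV[R]_n) (L k rho a eps : R) P j :
  0 <= L -> 0 <= k <= 1 -> (forall y : 'cV[R]_n, `|A *m y| <= L * `|y|) ->
  (forall i, `|e i| <= rho -> `|e i.+1 - A *m e i| <= k * `|e i|) ->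
  (L + 1) ^+ P * eps <= rho -> enorm (e 0%N) <= eps -> (j <= P)%N ->
  0 <= a -> opnorm (A ^+ j) <= a ->
  enorm (e j) <= a * eps + n%:R * P%:R * (L + 1) ^+ P * k * eps.
Proof.
move=> L_ge0 k01 AL step small e0_le jP a_ge0 Aj_le.
have L1_ge1 : 1 <= L + 1 by rewrite lerDr.
have LP_ge0 : 0 <= (L + 1) ^+ P by rewrite exprn_ge0 // (le_trans ler01).
have e0_le' : `|e 0%N| <= eps := le_trans (mx_norm_le_enorm _) e0_le.
have e0_small : (L + 1) ^+ P * `|e 0%N| <= rho.
  exact: le_trans (ler_wpM2l LP_ge0 e0_le') small.
have deviation := perturbed_orbit_deviation_le L_ge0 k01 AL step e0_small jP.
rewrite -[e j](subrK (A ^+ j *m e 0%N)) addrC (le_trans (enormD _ _)) //.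
apply: lerD.
  apply: le_trans (opnorm_mulmx_le _ _) _.
  apply: le_trans (ler_wpM2r (enorm_ge0 _) Aj_le) _.
  by apply: ler_wpM2l.
apply: le_trans (enorm_le_mx_norm _) _.
apply: le_trans (ler_wpM2l (ler0n _ _) deviation) _.
rewrite -!mulrA ler_wpM2l //.
have Lj_ge0 : 0 <= (L + 1) ^+ j by rewrite exprn_ge0 // (le_trans ler01).
have ke0_ge0 : 0 <= k * `|e 0%N| by rewrite mulr_ge0 // (andP k01).1.
refine (ler_pM (ler0n _ _) (mulr_ge0 Lj_ge0 ke0_ge0) _ _); first by rewrite ler_nat.
refine (ler_pM Lj_ge0 ke0_ge0 (ler_weXn2l L1_ge1 jP) _).
by rewrite ler_wpM2l // (andP k01).1.
Qed.

End LinearIterates.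


Lemma uncurry_f_col_mx (R : realType) l m (f : 'cV[R]_l -> 'cV[R]_m -> 'cV[R]_l) x w :
  uncurry_f f (col_mx x w) = f x w.
Proof. by rewrite /uncurry_f col_mxKu col_mxKd. Qed.

Section StablePath.
Variables (R : realType) (l m : nat) (f : 'cV[R]_l -> 'cV[R]_m -> 'cV[R]_l).
Variables (Lam : R -> 'cV[R]_m) (lm lp : 'cV[R]_m) (X : R -> 'cV[R]_l) (N : nat).
Hypotheses (f_C1 : C1 (uncurry_f f)) (Lam_shift : parameter_shift Lam lm lp).
Hypothesis X_stable : stable_path f Lam lm lp X.
Hypothesis DxfN_small : forall s n, (N <= n)%N ->
  opnorm ((Dxf f (X s) (Lam s)) ^+ n) < 4^-1.

Local Notation F := (uncurry_f f).
Local Notation J := (jacobian (uncurry_f f)).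
Local Notation path s := (col_mx (X s) (Lam s)).

Let F_diff : forall z, differentiable F z := proj1 f_C1.
Let J_cont : continuous J := proj2 f_C1.
Let X_fixed s : f (X s) (Lam s) = X s := proj1 X_stable s.

Let Lam_cont : continuous Lam.
Proof.
move=> s; apply: differentiable_continuous; apply/derivable1_diffP.
exact: (proj1 Lam_shift).
Qed.

Lemma X_locally_lipschitz_in_Lam s0 : exists2 r : R, 0 < r & exists2 K : R, 0 <= K &
  forall s, `|X s - X s0| < r -> `|Lam s - Lam s0| < r ->
    `|X s - X s0| <= K * `|Lam s - Lam s0|.
Proof.
(* With v = X s - X s0 and w = Lam s - Lam s0, Taylor's formula at path s0 gives
   v = A0 v + B0 w + o(|v| + |w|), and |v| <= C |v - A0 v|; the remainder
   constant 1 / (2 C) lets the term in |v| be absorbed on the left. *)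
set A0 := lsubmx (J (path s0)); set B0 := rsubmx (J (path s0)).
have A0N_lt1 : opnorm (A0 ^+ N) < 1.
  by rewrite (lt_trans (DxfN_small s0 (leqnn N))) // invf_lt1 // ltr1n.
have [C C_gt0 resolvent] := id_sub_mulmx_bounded_below A0N_lt1.
have k_gt0 : 0 < (2 * C)^-1 by rewrite invr_gt0 mulr_gt0.
have J_cont0 : {for path s0, continuous J} by exact: J_cont.
have [r r_gt0 remainder] := jacobian_remainder_near F_diff J_cont0 k_gt0.
pose M := m%:R * `|B0|.
exists (r / 2); first by rewrite divr_gt0.
exists (1 + 2 * C * M); first by rewrite addr_ge0 // !mulr_ge0 // ltW.
move=> s Xs Lams; set v := X s - X s0; set w := Lam s - Lam s0.
have vw_small : `|col_mx v w| < r.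
  by rewrite (le_lt_trans (mx_norm_col_mx_le _ _)) // [r]splitr ltrD.
have := remainder (path s0) (col_mx v w); rewrite subrr normr0 => /(_ r_gt0 vw_small).
rewrite add_col_mx !subrK !uncurry_f_col_mx !X_fixed.
rewrite -[J (path s0)]hsubmxK mul_row_col -/A0 -/B0 => taylor.
have Bw : `|B0 *m w| <= M * `|w| := mx_norm_mulmx_le _ _.
have v_le : `|v| <= C * (`|v - (A0 *m v + B0 *m w)| + `|B0 *m w|).
  apply: le_trans (resolvent v) _; apply: ler_wpM2l; first exact: ltW.
  have -> : v - A0 *m v = (v - (A0 *m v + B0 *m w)) + B0 *m w.
    by rewrite opprD addrA subrK.
  exact: ler_normD.
have := le_trans taylor (ler_wpM2l (ltW k_gt0) (mx_norm_col_mx_le v w)).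
move: v_le Bw; move: `|v| `|w| `|B0 *m w| `|v - (A0 *m v + B0 *m w)| => x y z t.
move=> x_le z_le t_le.
have Ct : C * t <= (x + y) / 2.
  apply: le_trans (ler_wpM2l (ltW C_gt0) t_le) _.
  by rewrite le_eqVlt; apply/orP; left; apply/eqP; field; rewrite gt_eqF.
have Cz : C * z <= C * M * y by rewrite -mulrA ler_pM2l.
nra.
Qed.

Lemma Lam_near s0 e : 0 < e -> \forall s \near s0, `|Lam s - Lam s0| < e.
Proof.
move=> e_gt0; have /cvgrPdist_lt/(_ e e_gt0) : Lam s @[s --> s0] --> Lam s0.
  exact: Lam_cont.
by apply: filterS => s; rewrite distrC.
Qed.

Lemma X_no_jump s0 r K : 0 < r -> 0 <= K ->
  (forall s, `|X s - X s0| < r -> `|Lam s - Lam s0| < r ->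
     `|X s - X s0| <= K * `|Lam s - Lam s0|) ->
  \forall s \near s0, `|X s - X s0| <= r / 2.
Proof.
(* While Lam s is close to Lam s0, the Lipschitz bound keeps X s out of the
   annulus r/2 < |X s - X s0| < r, which the connected graph cannot cross. *)
move=> r_gt0 K_ge0 X_lip.
have min_gt0 : 0 < Num.min r (r / (4 * (K + 1))).
  by rewrite lt_min r_gt0 divr_gt0 ?mulr_gt0 ?ltr_wpDl.
have [eta /= eta_gt0 Lam_eta] := (nbhs_normP _ _).1 (Lam_near s0 min_gt0).
apply/nbhs_normP; exists eta => // s /= s_near.
have gap s' : `|s0 - s'| <= `|s0 - s| ->
    `|X s' - X s0| < r -> `|X s' - X s0| <= r / 2.
  move=> s's Xs'; have := Lam_eta s' (le_lt_trans s's s_near).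
  rewrite /= lt_min => /andP[Lr LK]; apply: le_trans (X_lip s' Xs' Lr) _.
  move: LK; have := normr_ge0 (Lam s' - Lam s0).
  move: `|Lam s' - Lam s0| => a a_ge0; rewrite ltr_pdivlMr ?mulr_gt0 ?ltr_wpDl //; nra.
have G_conn := proj1 (proj2 X_stable).
case: (ltgtP s0 s) => [s0s|ss0|<-]; last by rewrite subrr normr0 divr_ge0 // ltW.
- apply: (@connected_graph_no_jump _ _ _ 1) => //; first by rewrite !mul1r.
  move=> s'; rewrite !mul1r => /andP[s0s' s's]; apply: gap.
  by rewrite !ler0_norm ?subr_le0 ?(ltW s0s) //; lra.
- apply: (@connected_graph_no_jump _ _ _ (-1)) => //; first by rewrite !mulN1r ltrN2.
  move=> s'; rewrite !mulN1r !lerN2 => /andP[s0s' s's]; apply: gap.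
  by rewrite !ger0_norm ?subr_ge0 ?(ltW ss0) //; lra.
Qed.

Lemma X_continuous : continuous X.
Proof.
move=> s0; have [r r_gt0 [K K_ge0 X_lip]] := X_locally_lipschitz_in_Lam s0.
have X_near := X_no_jump r_gt0 K_ge0 X_lip.
apply/cvgrPdist_lt => e e_gt0.
have eK_gt0 : 0 < e / (K + 1) by rewrite divr_gt0 ?ltr_wpDl.
near=> s; rewrite distrC.
have Xs : `|X s - X s0| < r.
  apply: le_lt_trans (_ : r / 2 < r); first by near: s.
  by rewrite ltr_pdivrMr // ltr_pMr // ltr1n.
have Lams : `|Lam s - Lam s0| < r by near: s; exact: Lam_near.
have Lam_e : `|Lam s - Lam s0| < e / (K + 1) by near: s; exact: Lam_near.
apply: le_lt_trans (X_lip s Xs Lams) _; move: Lam_e.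
move: `|Lam s - Lam s0| (normr_ge0 (Lam s - Lam s0)) => a a_ge0.
rewrite ltr_pdivlMr ?ltr_wpDl //; nra.
Unshelve. all: by end_near.
Qed.

Lemma path_continuous : continuous (fun s => path s).
Proof. by move=> s; apply: cvg_col_mx; [exact: X_continuous | exact: Lam_cont]. Qed.

Lemma near_along_path (I : Type) (G : set_system I) {FG : Filter G}
    (P : I -> 'cV[R]_(l + m) -> Prop) :
  (forall z : 'cV[R]_(l + m), \forall y \near z & i \near G, P i y) ->
  \forall i \near G, forall s, P i (path s).
Proof.
have [_ [_ [Xm [Xp [X_minf [X_pinf _]]]]]] := X_stable.
have [_ [_ [Lam_minf [Lam_pinf _]]]] := Lam_shift.
exact: near_uniform_along_curve path_continuous
  (cvg_col_mx X_minf Lam_minf) (cvg_col_mx X_pinf Lam_pinf).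
Qed.

Lemma Dxf_bounded_on_path : exists2 L : R, 0 <= L &
  forall s (y : 'cV[R]_l), `|Dxf f (X s) (Lam s) *m y| <= L * `|y|.
Proof.
suff [M0 [_ M0_bound]] : \forall M \near +oo, forall s, `|J (path s)| <= M.
  have J_bound s : `|J (path s)| <= M0 + 1 by apply: M0_bound; rewrite ltrDl.
  exists (l%:R * (M0 + 1)) => [|s y].
    by rewrite mulr_ge0 // (le_trans _ (J_bound 0)).
  rewrite (le_trans (mx_norm_mulmx_le _ _)) // ler_wpM2r // ler_wpM2l //.
  exact: le_trans (mx_norm_lsubmx_le _) (J_bound s).
apply: (@near_along_path _ _ _ (fun M y => `|J y| <= M)) => z.
have /cvgrPdist_lt/(_ _ ltr01) J_near : J y @[y --> z] --> J z by exact: J_cont.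
near=> y M => /=.
have Jy : `|J z - J y| < 1 by near: y.
have M_ge : `|J z| + 1 <= M by near: M; apply: nbhs_pinfty_ge; rewrite num_real.
have := lerB_dist (J y) (J z); rewrite (distrC (J y)) lerBlDl => Jyz.
by apply: le_trans Jyz (le_trans _ M_ge); rewrite lerD2l ltW.
Unshelve. all: by end_near.
Qed.

Lemma remainder_small_on_path k : 0 < k -> exists2 rho : R, 0 < rho &
  forall s h, `|h| <= rho ->
    `|F (h + path s) - F (path s) - J (path s) *m h| <= k * `|h|.
Proof.
move=> k_gt0.
have : \forall rho \near 0^'+, forall s h, `|h| <= rho ->
    `|F (h + path s) - F (path s) - J (path s) *m h| <= k * `|h|.
  apply: (@near_along_path _ _ _ (fun rho y => forall h, `|h| <= rho ->
    `|F (h + y) - F y - J y *m h| <= k * `|h|)) => z.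
  have J_contz : {for z, continuous J} by exact: J_cont.
  have [r r_gt0 remainder] := jacobian_remainder_near F_diff J_contz k_gt0.
  near=> y rho => h /= h_le; apply: remainder.
  - by rewrite distrC; near: y; apply/(nbhs_normP z); exists r.
  - by apply: le_lt_trans h_le _; near: rho; exact: nbhs_right_lt.
move=> /(filterI (@nbhs_right_gt R 0))/filter_ex[rho [rho_gt0 rho_small]].
by exists rho.
Unshelve. all: by end_near.
Qed.

Lemma Dxf_linearization k : 0 < k -> exists2 rho : R, 0 < rho &
  forall s x, `|x - X s| <= rho ->
    `|(f x (Lam s) - X s) - Dxf f (X s) (Lam s) *m (x - X s)| <= k * `|x - X s|.
Proof.
move=> /remainder_small_on_path[rho rho_gt0 remainder].
exists rho => // s x x_near.
have h_small : `|col_mx (x - X s) (0 : 'cV[R]_m)| <= rho by rewrite mx_norm_col_mx0.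
have := remainder s _ h_small.
rewrite add_col_mx add0r subrK !uncurry_f_col_mx X_fixed.
rewrite -[J _]hsubmxK mul_row_col mulmx0 addr0.
by move/le_trans; apply; rewrite mx_norm_col_mx0.
Qed.

Lemma iterate_error_le : exists2 eps0 : R, 0 < eps0 &
  forall eps : R, 0 < eps -> eps <= eps0 -> forall n, (N <= n <= N * N.+1)%N ->
  forall s x, enorm (x - X s) <= eps ->
    enorm (iter n (f^~ (Lam s)) x - X s) <= eps / 3.
Proof.
have [L L_ge0 AL] := Dxf_bounded_on_path.
pose P := (N * N.+1)%N.
have LP_gt0 : 0 < (L + 1) ^+ P by rewrite exprn_gt0 // ltr_wpDl.
(* [k] makes the accumulated linearization error [Q k eps] at most [eps / 12]. *)
pose Q : R := l%:R * P%:R * (L + 1) ^+ P.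
have Q_ge0 : 0 <= Q by rewrite !mulr_ge0 // ltW.
pose k : R := (12 * (Q + 1))^-1.
have k_gt0 : 0 < k by rewrite invr_gt0 mulr_gt0 // ltr_wpDl.
have k01 : 0 <= k <= 1.
  rewrite ltW // invf_le1 ?mulr_gt0 ?ltr_wpDl //.
  apply: (@le_trans _ _ (Q + 1)); first exact: ler_wpDl.
  by apply: ler_peMl; rewrite ?ler1n ?addr_ge0.
have Qk : Q * k <= 12^-1.
  rewrite /k invfM mulrCA; apply: ler_piMr; first by rewrite invr_ge0.
  by rewrite ler_pdivrMr ?mul1r ?lerDl // ltr_wpDl.
have [rho rho_gt0 linearization] := Dxf_linearization k_gt0.
exists (rho / (L + 1) ^+ P); first by rewrite divr_gt0.
move=> eps eps_gt0 eps_le n /andP[Nn nP] s x x_near.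
have small : (L + 1) ^+ P * eps <= rho by rewrite mulrC -ler_pdivlMr.
have inv4_ge0 : 0 <= 4^-1 :> R by rewrite invr_ge0.
have := perturbed_orbit_enorm_le (e := fun j => iter j (f^~ (Lam s)) x - X s)
  L_ge0 k01 (AL s) (fun j => linearization s _) small x_near nP inv4_ge0
  (ltW (DxfN_small s Nn)).
move/le_trans; apply; rewrite -/Q (_ : eps / 3 = 4^-1 * eps + eps / 12); last by field.
by rewrite lerD2l mulrC ler_pM2l.
Qed.

End StablePath.

Lemma iter_Fr0 (R : realType) l m (f : 'cV[R]_l -> 'cV[R]_m -> 'cV[R]_l) Lam n s x :
  iter n (Fr f Lam 0) (s, x) = (s, iter n (f^~ (Lam s)) x).
Proof. by elim: n => //= n ->; rewrite /Fr /= addr0. Qed.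

Theorem mainTheorem11 (R : realType) (l m : nat)
  (f : 'cV[R]_l -> 'cV[R]_m -> 'cV[R]_l) (Lam : R -> 'cV[R]_m)
  (lm lp : 'cV[R]_m) (X : R -> 'cV[R]_l) (N : nat) :
  C1 (uncurry_f f) ->
  parameter_shift Lam lm lp ->
  stable_path f Lam lm lp X ->
  (forall (s : R) (n : nat), (N <= n)%N ->
     opnorm ((Dxf f (X s) (Lam s)) ^+ n) < 4^-1) ->
  exists2 eps0 : R, 0 < eps0 &
    forall eps : R, 0 < eps -> eps <= eps0 ->
      forall n : nat, (N <= n <= N * N.+1)%N ->
        iter n (Fr f Lam 0) @` Neps X eps `<=` Neps X (eps / 3).
Proof.
move=> f_C1 Lam_shift X_stable DxfN_small.
have [eps0 eps0_gt0 iterate_error] := iterate_error_le f_C1 Lam_shift X_stable DxfN_small.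
exists eps0 => // eps eps_gt0 eps_le n Nn _ [[s x] x_near <-].
by rewrite iter_Fr0; exact: iterate_error.
Qed.
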